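(* Let $\mathcal{I}=(N,M,\mathcal{V})$ be an ordered instance with $n$ agents and goods $M=[m]$, and let $i\in N$. (1) If $g_1\ge 2n-1$, $g_2\ge 2n$ and $g_3\ge 2n+1$ are goods, then $\mathrm{MMS}^{n-1}_{v_i}(M\setminus\{g_1,g_2,g_3\})\ge\mathrm{MMS}^n_{v_i}(M)$. (2) If $g_1\ge 3n-2$, $g_2\ge 3n-1$, $g_3\ge 3n$ and $g_4\ge 3n+1$ are goods, then $\mathrm{MMS}^{n-1}_{v_i}(M\setminus\{g_1,g_2,g_3,g_4\})\ge\mathrm{MMS}^n_{v_i}(M)$.
   Context: Valuations are additive; the instance is ordered if $v_i(1)\ge v_i(2)\ge\dots\ge v_i(m)$ for all agents $i$. $\mathrm{MMS}^d_v(S)$ is the maximum over all partitions of $S$ into $d$ (possibly empty) bundles of the minimum bundle value under $v$. *)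

From HB Require Import structures.
From mathcomp Require Import all_boot all_order all_algebra.
Set Implicit Arguments. Unset Strict Implicit. Unset Printing Implicit Defensive.
Import Order.TTheory GRing.Theory Num.Theory.
Local Open Scope ring_scope.

(* Goods M = [m] are represented by 'I_m : the ordinal g stands for good g+1.
   Agents are 'I_n.  Valuations are additive: given by values of single goods. *)

(* Minimum / maximum of a finite nonempty list (default 0 on the empty list,
   which is never used in the statement since all lists involved are nonempty). *)
Definition seqmin (R : realDomainType) (l : seq R) : R :=
  foldr Num.min (head 0 l) (behead l).
Definition seqmax (R : realDomainType) (l : seq R) : R :=
  foldr Num.max (head 0 l) (behead l).

Definition bval (R : realDomainType) (m : nat) (v : 'I_m -> R) (S : {set 'I_m}) : R :=
  \sum_(g in S) v g.

(* A partition of S into d (possibly empty) bundles is given by an assignment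
   f : 'I_m -> 'I_d (only goods of S matter); bundle j is [set g in S | f g == j]. *)
Definition bundle (m d : nat) (S : {set 'I_m}) (f : {ffun 'I_m -> 'I_d}) (j : 'I_d)
  : {set 'I_m} := [set g in S | f g == j].

Definition minbundle (R : realDomainType) (m d : nat) (v : 'I_m -> R)
  (S : {set 'I_m}) (f : {ffun 'I_m -> 'I_d}) : R :=
  seqmin [seq bval v (bundle S f j) | j <- enum 'I_d].

(* MMS^d_v(S): maximum over all partitions of S into d bundles of the minimum
   bundle value (meaningful for d >= 1). *)
Definition MMS (R : realDomainType) (m : nat) (d : nat) (v : 'I_m -> R)
  (S : {set 'I_m}) : R :=
  seqmax [seq minbundle v S f | f <- enum {ffun 'I_m -> 'I_d}].

Definition ordered_val (R : realDomainType) (m : nat) (v : 'I_m -> R) : Prop :=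
  forall g h : 'I_m, (g <= h)%N -> v h <= v g.

Definition ordered_instance (R : realDomainType) (n m : nat)
  (V : 'I_n -> 'I_m -> R) : Prop :=
  (forall i g, 0 <= V i g) /\ (forall i, ordered_val (V i)).

From HB Require Import structures.
From mathcomp Require Import all_boot all_order all_algebra perm zify.
Set Implicit Arguments. Unset Strict Implicit. Unset Printing Implicit Defensive.
Import Order.TTheory GRing.Theory Num.Theory.
Local Open Scope ring_scope.

(* Fix an optimal partition into n bundles, of value mu. Some bundle B contains K of
   the L+1 most valuable goods (pigeonhole), and the removed goods G are so late that
   every prefix 0..t of the goods contains at least as many goods of B as of G.  Hence
   each good of G outside B can be matched to a distinct earlier, hence at least as
   valuable, good of B outside G; exchanging the two never decreases a bundle other
   than B.  Once G is inside B, dropping B leaves n-1 bundles of M minus G, each still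
   worth at least mu. *)

Section SeqMinMax.
Context {R : realDomainType}.
Implicit Types (l : seq R) (x mu : R).

Lemma seqmin_le l x : x \in l -> seqmin l <= x.
Proof.
case: l => // a l; rewrite /seqmin /=.
elim: l x => [|b l IH] x /=; first by rewrite inE => /eqP->.
rewrite !inE => /or3P[/eqP->|/eqP->|xl].
- by rewrite ge_min (IH _ (mem_head _ _)) orbT.
- by rewrite ge_min lexx.
- by rewrite ge_min IH ?orbT // inE xl orbT.
Qed.

Lemma seqmin_ge mu l : l != [::] -> {in l, forall x, mu <= x} -> mu <= seqmin l.
Proof.
case: l => // a l _; rewrite /seqmin /=.
elim: l => [|b l IH] mu_le /=; first exact/mu_le/mem_head.
rewrite le_min mu_le ?inE ?eqxx ?orbT //=.
by apply: IH => x xal; apply: mu_le; move: xal; rewrite !inE => /orP[]->; rewrite ?orbT.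
Qed.

Lemma seqmax_ge l x : x \in l -> x <= seqmax l.
Proof.
case: l => // a l; rewrite /seqmax /=.
elim: l x => [|b l IH] x /=; first by rewrite inE => /eqP->.
rewrite !inE => /or3P[/eqP->|/eqP->|xl].
- by rewrite le_max (IH _ (mem_head _ _)) orbT.
- by rewrite le_max lexx.
- by rewrite le_max IH ?orbT // inE xl orbT.
Qed.

Lemma seqmax_mem l : l != [::] -> seqmax l \in l.
Proof.
case: l => // a l _; rewrite /seqmax /=.
elim: l => [|b l IH] /=; first exact: mem_head.
case: leP => _; rewrite !inE ?eqxx ?orbT //.
by move: IH; rewrite inE => /orP[]->; rewrite ?orbT.
Qed.

End SeqMinMax.

Section MMS.
Variables (R : realDomainType) (m : nat) (v : 'I_m -> R).

Lemma bval_bundleT d (f : {ffun 'I_m -> 'I_d}) b :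
  bval v (bundle setT f b) = \sum_(g | f g == b) v g.
Proof. by apply: eq_bigl => g; rewrite !inE. Qed.

Lemma bval_subset (A B : {set 'I_m}) :
  (forall g, 0 <= v g) -> A \subset B -> bval v A <= bval v B.
Proof.
move=> v_ge0 AB; rewrite /bval [X in _ <= X](big_setID A) /= (setIidPr AB).
by rewrite lerDl sumr_ge0.
Qed.

Lemma minbundle_le d (S : {set 'I_m}) (f : {ffun 'I_m -> 'I_d}) j :
  minbundle v S f <= bval v (bundle S f j).
Proof. by apply/seqmin_le/map_f; rewrite mem_enum. Qed.

Lemma MMS_ge d (S : {set 'I_m}) (f : {ffun 'I_m -> 'I_d.+1}) mu :
  (forall j, mu <= bval v (bundle S f j)) -> mu <= MMS d.+1 v S.
Proof.
move=> mu_le.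
have f_in : minbundle v S f \in [seq minbundle v S f | f <- enum {ffun 'I_m -> 'I_d.+1}].
  by apply: map_f; rewrite mem_enum.
apply: le_trans _ (seqmax_ge f_in); apply: seqmin_ge => [|_ /mapP[j _ ->] //].
by rewrite -size_eq0 size_map size_enum_ord.
Qed.

Lemma MMS_attained d (S : {set 'I_m}) :
  exists f : {ffun 'I_m -> 'I_d.+1}, MMS d.+1 v S = minbundle v S f.
Proof.
have /seqmax_mem/mapP[f _ Ef] :
    [seq minbundle v S f | f <- enum {ffun 'I_m -> 'I_d.+1}] != [::].
  by rewrite -size_eq0 size_map -cardE card_ffun card_ord -lt0n expn_gt0.
by exists f.
Qed.

End MMS.

Definition prefix_card m (A : {set 'I_m}) (t : nat) : nat := #|[set g in A | (g <= t)%N]|.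

Definition dominated m (Y X : {set 'I_m}) : Prop :=
  forall t, (prefix_card Y t <= prefix_card X t)%N.

Section PrefixCard.
Variable m : nat.
Implicit Types (A B G P X Y : {set 'I_m}) (t : nat).

Lemma prefix_cardID A B t :
  prefix_card A t = (prefix_card (A :&: B) t + prefix_card (A :\: B) t)%N.
Proof.
rewrite /prefix_card -(cardsID B [set g in A | (g <= t)%N]).
by congr (_ + _)%N; apply: eq_card => g; rewrite !inE;
  case: (g \in A); case: (g \in B); rewrite ?andbF ?andbT.
Qed.

Lemma prefix_cardD1 A a t : a \in A -> (a <= t)%N ->
  prefix_card A t = (prefix_card (A :\ a) t).+1.
Proof.
move=> aA a_le; rewrite /prefix_card (cardsD1 a) inE aA a_le add1n.
by congr _.+1; apply: eq_card => g; rewrite !inE andbA.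
Qed.

Lemma card_ord_itv t L : (#|[set g : 'I_m | (t < g <= L)%N]| <= L - t)%N.
Proof.
rewrite cardE -(size_map val) -(size_iota t.+1 (L - t)).
apply: uniq_leq_size; first by rewrite map_inj_uniq ?enum_uniq //; apply: val_inj.
move=> x /mapP[g]; rewrite mem_enum inE => /andP[tg gL] ->.
rewrite mem_iota -[val g]/(nat_of_ord g); lia.
Qed.

Lemma prefix_card_shift A K L t :
  (K <= prefix_card A L)%N -> (K - (L - t) <= prefix_card A t)%N.
Proof.
rewrite /prefix_card => K_le; have itv := card_ord_itv t L.
have sub : [set g in A | (g <= L)%N]
    \subset [set g in A | (g <= t)%N] :|: [set g : 'I_m | (t < g <= L)%N].
  by apply/subsetP => g; rewrite !inE => /andP[-> ->]; rewrite andbT leqVgt.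
rewrite leq_subLR; apply: leq_trans K_le _; apply: leq_trans (subset_leq_card sub) _.
by apply: leq_trans (leq_card_setU _ _) _; rewrite addnC leq_add2r.
Qed.

Lemma prefix_card_le_count G (s : seq 'I_m) t : G =i s ->
  (prefix_card G t <= count (fun g : 'I_m => (g <= t)%N) s)%N.
Proof.
move=> Gs; rewrite -size_filter; apply: leq_trans (card_size _).
by apply: subset_leq_card; apply/subsetP => g; rewrite !inE mem_filter Gs andbC.
Qed.

Lemma dominated_setD G P : dominated G P -> dominated (G :\: P) (P :\: G).
Proof.
move=> dom t; have := dom t.
by rewrite (prefix_cardID G P) (prefix_cardID P G) setIC leq_add2l.
Qed.

Lemma dominated_minD1 Y X y : dominated Y X -> y \in Y ->
  {in Y, forall z : 'I_m, (y <= z)%N} ->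
  exists2 x, x \in X & (x <= y)%N /\ dominated (Y :\ y) (X :\ x).
Proof.
move=> dom yY ymin.
have [x1 x1X x1y] : exists2 x1, x1 \in X & (x1 <= y)%N.
  have : (0 < prefix_card X y)%N.
    apply: leq_trans _ (dom y); rewrite card_gt0.
    by apply/set0Pn; exists y; rewrite inE yY /=.
  by rewrite /prefix_card card_gt0 => /set0Pn[x1]; rewrite inE => /andP[]; exists x1.
have [x xX xmin] := arg_minnP (fun x : 'I_m => val x) x1X.
have xy : (x <= y)%N := leq_trans (xmin _ x1X) x1y.
exists x => //; split=> // t.
have [ty|yt] := ltnP t y.
  suff -> : prefix_card (Y :\ y) t = 0%N by [].
  apply: eq_card0 => z; rewrite !inE; apply/negP => /andP[/andP[_ zY] zt].
  by have := ymin _ zY; lia.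
by have := dom t; rewrite (prefix_cardD1 yY yt) (prefix_cardD1 xX (leq_trans xy yt)).
Qed.

End PrefixCard.

Lemma pigeonhole_prefix m d (f : {ffun 'I_m -> 'I_d}) K L :
  (L < m)%N -> (d * K.-1 < L.+1)%N -> exists k, (K <= prefix_card (bundle setT f k) L)%N.
Proof.
move=> Lm dK.
have [/existsP //|] := boolP [exists k, (K <= prefix_card (bundle setT f k) L)%N].
rewrite negb_exists => /forallP small.
have split_prefix : #|[set g : 'I_m | (g <= L)%N]|
    = (\sum_(k < d) prefix_card (bundle setT f k) L)%N.
  rewrite -sum1dep_card (partition_big f xpredT) //=; apply: eq_bigr => k _.
  by rewrite sum1dep_card; apply: eq_card => g; rewrite !inE andbC.
have : (\sum_(k < d) prefix_card (bundle setT f k) L <= \sum_(k < d) K.-1)%N.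
  by apply: leq_sum => k _; have := small k; lia.
have prefix_big : (L.+1 <= #|[set g : 'I_m | (g <= L)%N]|)%N.
  have widen_inj : injective (widen_ord Lm) by move=> i j /(congr1 val) ij; apply: val_inj.
  rewrite -[X in (X <= _)%N]card_ord -(card_imset _ widen_inj).
  by apply/subset_leq_card/subsetP => _ /imsetP[i _ ->]; rewrite inE /= -ltnS.
by rewrite -split_prefix sum_nat_const card_ord; lia.
Qed.

Definition others_ge (R : realDomainType) m d (v : 'I_m -> R) (k : 'I_d) (mu : R)
    (f : {ffun 'I_m -> 'I_d}) : Prop :=
  forall b, b != k -> mu <= bval v (bundle setT f b).

Definition swap_goods m d (f : {ffun 'I_m -> 'I_d}) (x y : 'I_m) : {ffun 'I_m -> 'I_d} :=
  [ffun g => f (tperm x y g)].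

Section SwapGoods.
Variables (m d : nat) (f : {ffun 'I_m -> 'I_d}) (x y : 'I_m).

Lemma bval_swap_goods (R : realDomainType) (v : 'I_m -> R) b :
  f x != b -> v y <= v x ->
  bval v (bundle setT f b) <= bval v (bundle setT (swap_goods f x y) b).
Proof.
move=> fxb vyx.
rewrite !bval_bundleT [X in _ <= X](reindex_inj (@perm_inj _ (tperm x y))) /=.
under [X in _ <= X]eq_bigl => g do rewrite /swap_goods ffunE tpermK.
apply: ler_sum => g fgb; have [->|gy] := eqVneq g y; first by rewrite tpermR.
have xg : x != g by apply: contraNneq fxb => ->.
by rewrite tpermD // eq_sym.
Qed.

Lemma bundle_swap_goods k : f x = k -> f y != k ->
  bundle setT (swap_goods f x y) k = y |: (bundle setT f k :\ x).
Proof.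
move=> fx fy; apply/setP => g; rewrite !inE /swap_goods ffunE.
have [->|gy] := eqVneq g y; first by rewrite tpermR fx eqxx.
have [->|gx] := eqVneq g x; first by rewrite tpermL (negbTE fy).
by rewrite tpermD 1?eq_sym.
Qed.

End SwapGoods.

Section Gather.
Variables (R : realDomainType) (m d : nat) (v : 'I_m -> R) (k : 'I_d) (mu : R).
Hypothesis v_ordered : ordered_val v.

Lemma others_ge_swap (f : {ffun 'I_m -> 'I_d}) (x y : 'I_m) :
  f x = k -> (x <= y)%N -> others_ge v k mu f -> others_ge v k mu (swap_goods f x y).
Proof.
move=> fx xy f_ge b bk; apply: le_trans (f_ge b bk) _.
by apply: bval_swap_goods; [rewrite fx eq_sym | exact: v_ordered].
Qed.

Lemma gather_dominated (f : {ffun 'I_m -> 'I_d}) (G : {set 'I_m}) :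
  others_ge v k mu f ->
  dominated (G :\: bundle setT f k) (bundle setT f k :\: G) ->
  exists2 f', others_ge v k mu f' & G \subset bundle setT f' k.
Proof.
move Nf : #|G :\: bundle setT f k| => N.
elim: N f Nf => [|N IH] f Nf f_ge dom.
  by exists f => //; rewrite -setD_eq0 -cards_eq0 Nf.
set P := bundle setT f k in Nf dom.
have [y yY ymin] : exists2 y, y \in G :\: P & {in G :\: P, forall z : 'I_m, (y <= z)%N}.
  have [y0 y0Y] : exists y0, y0 \in G :\: P by apply/set0Pn; rewrite -card_gt0 Nf.
  by have [y yY ymin] := arg_minnP (fun y : 'I_m => val y) y0Y; exists y.
have [x xX [xy dom']] := dominated_minD1 dom yY ymin.
have [xG fx] : x \notin G /\ f x = k by move: xX; rewrite !inE => /andP[-> /eqP].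
have [fy yG] : f y != k /\ y \in G by move: yY; rewrite !inE => /andP[].
have GP' : G :\: (y |: P :\ x) = (G :\: P) :\ y.
  apply/setP => g; rewrite !inE.
  have [->|gx] := eqVneq g x; first by rewrite (negbTE xG) !andbF.
  by case: (g == y); case: (g \in P); case: (g \in G).
have P'G : (y |: P :\ x) :\: G = (P :\: G) :\ x.
  apply/setP => g; rewrite !inE.
  have [->|gy] := eqVneq g y; first by rewrite yG andbF.
  by case: (g == x); case: (g \in P); case: (g \in G).
apply: (IH (swap_goods f x y)); rewrite ?bundle_swap_goods // -/P ?GP' ?P'G //.
- by move: Nf; rewrite (cardsD1 y) yY => -[].
- exact: others_ge_swap.
Qed.

End Gather.

Lemma MMS_drop_bundle (R : realDomainType) m d (v : 'I_m -> R) (k : 'I_d.+2) mu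
    (f : {ffun 'I_m -> 'I_d.+2}) (G : {set 'I_m}) :
  (forall g, 0 <= v g) -> others_ge v k mu f -> G \subset bundle setT f k ->
  mu <= MMS d.+1 v (setT :\: G).
Proof.
move=> v_ge0 f_ge GP.
(* Goods of bundle k outside G land in bundle 0, which can only help. *)
pose f' : {ffun 'I_m -> 'I_d.+1} := [ffun g => odflt ord0 (unlift k (f g))].
apply: (MMS_ge (f := f')) => j.
have kj : lift k j != k by rewrite eq_sym neq_lift.
apply: le_trans (f_ge _ kj) (bval_subset v_ge0 _).
apply/subsetP => g; rewrite !inE /= => /eqP fg.
have gG : g \notin G by apply/negP => /(subsetP GP); rewrite !inE fg (negbTE kj).
by rewrite gG ffunE fg liftK /= eqxx.
Qed.

Lemma MMS_setD_ge (R : realDomainType) m n (v : 'I_m -> R) (G : {set 'I_m}) K L :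
  (forall g, 0 <= v g) -> ordered_val v -> (L < m)%N -> (n.+2 * K.-1 < L.+1)%N ->
  (forall t, prefix_card G t <= K - (L - t))%N ->
  MMS n.+2 v setT <= MMS n.+1 v (setT :\: G).
Proof.
move=> v_ge0 v_ord Lm nK G_sparse.
have [f ->] := MMS_attained v n.+1 setT.
have [k Pk] := pigeonhole_prefix f Lm nK.
have f_ge : others_ge v k (minbundle v setT f) f by move=> b _; exact: minbundle_le.
have dom : dominated G (bundle setT f k).
  by move=> t; apply: leq_trans (G_sparse t) (prefix_card_shift t Pk).
have [f' f'_ge GP] := gather_dominated v_ord f_ge (dominated_setD dom).
exact: MMS_drop_bundle v_ge0 f'_ge GP.
Qed.

Theorem lemma15 (R : realDomainType) (n m : nat) (V : 'I_n -> 'I_m -> R)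
  (i : 'I_n) :
  (2 <= n)%N -> ordered_instance V ->
  (forall g1 g2 g3 : 'I_m,
      (2 * n - 1 <= g1.+1)%N -> (2 * n <= g2.+1)%N -> (2 * n + 1 <= g3.+1)%N ->
      g1 != g2 -> g1 != g3 -> g2 != g3 ->
      MMS n (V i) [set: 'I_m] <=
      MMS n.-1 (V i) ([set: 'I_m] :\: [set g1; g2; g3]))
  /\
  (forall g1 g2 g3 g4 : 'I_m,
      (3 * n - 2 <= g1.+1)%N -> (3 * n - 1 <= g2.+1)%N ->
      (3 * n <= g3.+1)%N -> (3 * n + 1 <= g4.+1)%N ->
      g1 != g2 -> g1 != g3 -> g1 != g4 -> g2 != g3 -> g2 != g4 -> g3 != g4 ->
      MMS n (V i) [set: 'I_m] <=
      MMS n.-1 (V i) ([set: 'I_m] :\: [set g1; g2; g3; g4])).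
Proof.
case: n V i => [|[|n]] V i //= _ [V_ge0 V_ord]; split.
- move=> g1 g2 g3 g1_ge g2_ge g3_ge _ _ _.
  apply: (@MMS_setD_ge _ _ _ _ _ 3 (2 * n.+2)) => //; [by have := ltn_ord g3; lia | lia|].
  move=> t; apply: leq_trans (@prefix_card_le_count _ _ [:: g1; g2; g3] t _) _.
    by move=> g; rewrite !inE -!orbA.
  by rewrite /=; case: (leqP g1 t); case: (leqP g2 t); case: (leqP g3 t); lia.
- move=> g1 g2 g3 g4 g1_ge g2_ge g3_ge g4_ge _ _ _ _ _ _.
  apply: (@MMS_setD_ge _ _ _ _ _ 4 (3 * n.+2)) => //; [by have := ltn_ord g4; lia | lia|].
  move=> t; apply: leq_trans (@prefix_card_le_count _ _ [:: g1; g2; g3; g4] t _) _.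
    by move=> g; rewrite !inE -!orbA.
  by rewrite /=; case: (leqP g1 t); case: (leqP g2 t); case: (leqP g3 t);
    case: (leqP g4 t); lia.
Qed.
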